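(* Let $G_1,G_2$ be locally compact groups and $M_1,M_2$ locally compact topological spaces. Suppose $G_j$ acts properly on $M_j$ for $j=1,2$, and $G_2$ also acts (not necessarily properly) on $M_1$, commuting with the action of $G_1$. Then the action of $G_1\times G_2$ on $M_1\times M_2$ given by $(g_1,g_2)\cdot(m_1,m_2)=(g_1g_2m_1,g_2m_2)$ is proper.
   Context: An action of a topological group $H$ on a topological space $X$ is proper if for every compact $K\subseteq X$ the set $\{h\in H: hK\cap K\neq\emptyset\}$ is compact. *)

From HB Require Import structures.
From mathcomp Require Import all_boot all_order all_algebra.
From mathcomp Require Import all_classical all_reals all_analysis.
Set Implicit Arguments. Unset Strict Implicit. Unset Printing Implicit Defensive.
Local Open Scope classical_set_scope.

Definition topological_group (G : topologicalType)
    (mul : G -> G -> G) (inv : G -> G) (e : G) : Prop :=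
  [/\ (forall x y z, mul x (mul y z) = mul (mul x y) z),
      (forall x, mul e x = x /\ mul x e = x),
      (forall x, mul (inv x) x = e /\ mul x (inv x) = e),
      continuous (fun p : G * G => mul p.1 p.2)
    & continuous inv].

Definition locally_compact_space (X : topologicalType) : Prop :=
  hausdorff_space X /\ locally_compact [set: X].

Definition continuous_action (G X : topologicalType)
    (mul : G -> G -> G) (e : G) (act : G -> X -> X) : Prop :=
  [/\ (forall x, act e x = x),
      (forall g h x, act (mul g h) x = act g (act h x))
    & continuous (fun p : G * X => act p.1 p.2)].

Definition proper_action (G X : topologicalType) (act : G -> X -> X) : Prop :=
  forall K : set X, compact K ->
    compact [set h : G | exists2 x, K x & K (act h x)].

From HB Require Import structures.
From mathcomp Require Import all_boot all_order all_algebra.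
From mathcomp Require Import all_classical all_reals all_analysis.
Local Open Scope classical_set_scope.

(* If (g1, g2) moves some point of K back into K, then g2 moves the
   projection K2 of K into itself, so g2 lies in the compact set C2 given by
   properness of act2; and g1 moves a point of the compact set
   L = act21 (C2 x K1) into the projection K1, so g1 lies in the compact set
   given by properness of act1 for L u K1.  The set of such pairs (g1, g2) is
   then the projection of a closed subset of a compact box times K: closed
   because K is closed in the Hausdorff space M1 x M2 and the action is
   continuous. *)

Lemma hausdorff_prod {U V : topologicalType} :
  hausdorff_space U -> hausdorff_space V -> hausdorff_space (U * V)%type.
Proof.
move=> hU hV [p1 p2] [q1 q2]; rewrite cluster_cvgE => -[F PF [Fq pF]].
congr pair; [apply: hU | apply: hV]; rewrite cluster_cvgE.
- exists (fst @ F); first exact: fmap_proper_filter.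
  by split; [apply: cvg_trans (cvg_app fst Fq) _ | apply: cvg_trans (cvg_app fst pF) _];
    exact: cvg_fst.
- exists (snd @ F); first exact: fmap_proper_filter.
  by split; [apply: cvg_trans (cvg_app snd Fq) _ | apply: cvg_trans (cvg_app snd pF) _];
    exact: cvg_snd.
Qed.

Lemma continuous_fst {U V : topologicalType} : continuous (@fst U V).
Proof. by move=> x; exact: cvg_fst. Qed.

Lemma continuous_snd {U V : topologicalType} : continuous (@snd U V).
Proof. by move=> x; exact: cvg_snd. Qed.

Definition transporter {G X : Type} (act : G -> X -> X) (A B : set X) : set G :=
  [set g | exists2 x, A x & B (act g x)].

Lemma transporterS {G X : Type} (act : G -> X -> X) (A A' B B' : set X) :
  A `<=` A' -> B `<=` B' -> transporter act A B `<=` transporter act A' B'.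
Proof. by move=> AA' BB' g [x /AA' A'x /BB' B'gx]; exists x. Qed.

Lemma compact_transporter {G X : topologicalType} {act : G -> X -> X}
    {A B : set X} {C : set G} :
  continuous (fun p : G * X => act p.1 p.2) -> hausdorff_space X ->
  compact A -> compact B -> compact C -> transporter act A B `<=` C ->
  compact (transporter act A B).
Proof.
move=> cact hX cA cB cC sub.
have -> : transporter act A B =
    fst @` ((C `*` A) `&` (fun p => act p.1 p.2) @^-1` B).
  apply/seteqP; split => [g tg|_ [[g x] [[_ Ax] Bgx] <-]]; last by exists x.
  by case: (tg) => x Ax Bgx; exists (g, x) => //; do 2?split => //; exact: sub.
apply: continuous_compact; first exact/continuous_subspaceT/continuous_fst.
apply: compact_closedI; first exact: compact_setX.
exact: preimage_closed (fun p _ => cact p) (compact_closed hX cB).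
Qed.

Definition twisted_act {G1 G2 M1 M2 : Type}
    (act1 : G1 -> M1 -> M1) (act2 : G2 -> M2 -> M2) (act21 : G2 -> M1 -> M1)
    (g : G1 * G2) (m : M1 * M2) : M1 * M2 :=
  (act1 g.1 (act21 g.2 m.1), act2 g.2 m.2).

Section TwistedProductAction.
Context {G1 G2 M1 M2 : topologicalType}.
Context {act1 : G1 -> M1 -> M1} {act2 : G2 -> M2 -> M2} {act21 : G2 -> M1 -> M1}.
Local Notation twisted_act := (twisted_act act1 act2 act21).

Lemma continuous_twisted_act :
  continuous (fun p : G1 * M1 => act1 p.1 p.2) ->
  continuous (fun p : G2 * M2 => act2 p.1 p.2) ->
  continuous (fun p : G2 * M1 => act21 p.1 p.2) ->
  continuous (fun p : (G1 * G2) * (M1 * M2) => twisted_act p.1 p.2).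
Proof.
move=> c1 c2 c21.
pose P := ((G1 * G2) * (M1 * M2))%type.
have g1 : continuous (fun p : P => p.1.1).
  by move=> p; exact: continuous_comp (continuous_fst _) (continuous_fst _).
have g2 : continuous (fun p : P => p.1.2).
  by move=> p; exact: continuous_comp (continuous_fst _) (continuous_snd _).
have m1 : continuous (fun p : P => p.2.1).
  by move=> p; exact: continuous_comp (continuous_snd _) (continuous_fst _).
have m2 : continuous (fun p : P => p.2.2).
  by move=> p; exact: continuous_comp (continuous_snd _) (continuous_snd _).
move=> p; rewrite /twisted_act; apply: cvg_pair.
- apply: continuous2_cvg (c1 (_, _)) (g1 p) _.
  exact: continuous2_cvg (c21 (_, _)) (g2 p) (m1 p).
- exact: continuous2_cvg (c2 (_, _)) (g2 p) (m2 p).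
Qed.

Lemma transporter_twisted_act_subset {K : set (M1 * M2)} {K1 : set M1} {K2 : set M2} :
  K `<=` K1 `*` K2 ->
  transporter twisted_act K K `<=`
    transporter act1 ((fun p => act21 p.1 p.2) @` (transporter act2 K2 K2 `*` K1)) K1
    `*` transporter act2 K2 K2.
Proof.
move=> sK [g1 g2] [[x1 x2] Kx Kgx].
have [/= K1x K2x] := sK _ Kx; have [/= K1gx K2gx] := sK _ Kgx.
split; [exists (act21 g2 x1) | by exists x2] => //.
by exists (g2, x1) => //; split => //; exists x2.
Qed.

Lemma proper_twisted_act :
  hausdorff_space M1 -> hausdorff_space M2 ->
  continuous (fun p : G1 * M1 => act1 p.1 p.2) ->
  continuous (fun p : G2 * M2 => act2 p.1 p.2) ->
  continuous (fun p : G2 * M1 => act21 p.1 p.2) ->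
  proper_action act1 -> proper_action act2 -> proper_action twisted_act.
Proof.
move=> hM1 hM2 c1 c2 c21 pr1 pr2 K cK.
set K1 := fst @` K; set K2 := snd @` K.
have cK1 : compact K1.
  by apply: continuous_compact cK; exact/continuous_subspaceT/continuous_fst.
have cK2 : compact K2.
  by apply: continuous_compact cK; exact/continuous_subspaceT/continuous_snd.
have cC2 : compact (transporter act2 K2 K2) := pr2 _ cK2.
set L := (fun p => act21 p.1 p.2) @` (transporter act2 K2 K2 `*` K1).
have cL : compact L.
  by apply: continuous_compact (compact_setX cC2 cK1); exact: continuous_subspaceT.
have cC1 : compact (transporter act1 (L `|` K1) (L `|` K1)) := pr1 _ (compactU cL cK1).
apply: (compact_transporter (continuous_twisted_act c1 c2 c21)
  (hausdorff_prod hM1 hM2) cK cK (compact_setX cC1 cC2)).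
have sK : K `<=` K1 `*` K2 by move=> x Kx; split; exists x.
apply: subset_trans (transporter_twisted_act_subset sK) _.
by apply: setSX => //; apply: transporterS => x; [left | right].
Qed.

End TwistedProductAction.

Theorem lemma3p4
  (G1 G2 M1 M2 : topologicalType)
  (mul1 : G1 -> G1 -> G1) (inv1 : G1 -> G1) (e1 : G1)
  (mul2 : G2 -> G2 -> G2) (inv2 : G2 -> G2) (e2 : G2)
  (act1 : G1 -> M1 -> M1) (act2 : G2 -> M2 -> M2) (act21 : G2 -> M1 -> M1)
  (hG1 : topological_group mul1 inv1 e1) (hG2 : topological_group mul2 inv2 e2)
  (lcG1 : locally_compact_space G1) (lcG2 : locally_compact_space G2)
  (lcM1 : locally_compact_space M1) (lcM2 : locally_compact_space M2)
  (hact1 : continuous_action mul1 e1 act1)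
  (hact2 : continuous_action mul2 e2 act2)
  (hact21 : continuous_action mul2 e2 act21)
  (pr1 : proper_action act1) (pr2 : proper_action act2)
  (hcomm : forall g1 g2 m, act21 g2 (act1 g1 m) = act1 g1 (act21 g2 m)) :
  proper_action (fun (g : G1 * G2) (m : M1 * M2) =>
                   (act1 g.1 (act21 g.2 m.1), act2 g.2 m.2)).
Proof.
case: hact1 hact2 hact21 => [_ _ c1] [_ _ c2] [_ _ c21].
case: lcM1 lcM2 => [hM1 _] [hM2 _].
exact: proper_twisted_act hM1 hM2 c1 c2 c21 pr1 pr2.
Qed.
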